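(* The following two identities hold: $$\sum_{k=1}^\infty\frac{(95k^2-84k+16)(9/8)^{k-1}}{k(3k-1)(3k-2)\binom{4k}k}=\frac{2\pi}{\sqrt3}$$ and $$\sum_{k=1}^\infty\frac{(5k^2-4k+1)8^{k}}{k(3k-1)(3k-2)\binom{4k}k}=\frac{3\pi}{2}.$$ *)

From Stdlib Require Import Reals.
From Coquelicot Require Import Coquelicot.
Open Scope R_scope.

Definition term1 (k : nat) : R :=
  let x := INR k in
  (95 * x ^ 2 - 84 * x + 16) * (9 / 8) ^ (k - 1)
  / (x * (3 * x - 1) * (3 * x - 2) * Binomial.C (4 * k) k).

Definition term2 (k : nat) : R :=
  let x := INR k in
  (5 * x ^ 2 - 4 * x + 1) * 8 ^ k
  / (x * (3 * x - 1) * (3 * x - 2) * Binomial.C (4 * k) k).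

(* Both series are sums of integrals: since 1 / binom(4k,k) is a Beta
   integral up to rational factors in k, each summand is a moment
   \int_0^1 h(x) r(x)^k dx with r(x) = c x (1-x)^3, c = 9/8 or 8, and h a
   cubic.  As 0 <= r < 1 on [0,1], summing the geometric series under the
   integral gives \int_0^1 h/(1-r), an integral of a rational function with
   quartic denominator, which is computed from explicit primitives made of
   logarithms and arctangents. *)
From Stdlib Require Import Reals Lra Lia Factorial.
From Coquelicot Require Import Coquelicot.
Open Scope R_scope.

(* Coquelicot states pointwise equalities at the carrier of a normed module,
   which [ring] and [field] do not recognise as [R]. *)
Ltac as_R_eq := match goal with |- ?x = ?y => change (@eq R x y) end.

Lemma is_lim_seq_of_error_bound (s e : nat -> R) (l : R) :
  (forall N, Rabs (s N - l) <= e N) -> is_lim_seq e 0 -> is_lim_seq s l.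
Proof.
  intros Hse He.
  assert (Hl : forall sgn, is_lim_seq (fun N => l + sgn * e N) l).
  { intro sgn.
    pose proof (is_lim_seq_plus' _ _ l (sgn * 0) (is_lim_seq_const l)
                  (is_lim_seq_scal_l _ sgn 0 He)) as H.
    now rewrite Rmult_0_r, Rplus_0_r in H. }
  apply (is_lim_seq_le_le (fun N => l + -1 * e N) _ (fun N => l + 1 * e N)).
  - intro N. pose proof (Hse N) as HN. apply Rabs_le_between' in HN. lra.
  - apply Hl.
  - apply Hl.
Qed.

Section GeometricSeriesUnderIntegral.

Variables (h r : R -> R) (a b q M I : R) (mom : nat -> R).
Hypothesis Hab : a <= b.
Hypothesis Hq : 0 <= q < 1.
Hypothesis Hr : forall x, a <= x <= b -> Rabs (r x) <= q.
Hypothesis Hh : forall x, a <= x <= b -> Rabs (h x) <= M.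
Hypothesis HI : is_RInt (fun x => h x / (1 - r x)) a b I.
Hypothesis Hmom : forall k, is_RInt (fun x => h x * r x ^ k) a b (mom k).

Lemma is_RInt_partial_geom N :
  is_RInt (fun x => h x * sum_n (fun k => r x ^ k) N) a b (sum_n mom N).
Proof.
  induction N as [|N IH].
  - rewrite sum_O.
    apply (is_RInt_ext (fun x => h x * r x ^ 0)); [| apply Hmom].
    intros x _. now rewrite sum_O.
  - rewrite sum_Sn.
    apply (is_RInt_ext (fun x => h x * sum_n (fun k => r x ^ k) N + h x * r x ^ S N)).
    + intros x _. rewrite sum_Sn. unfold plus; simpl. ring.
    + apply (is_RInt_plus _ _ _ _ _ _ IH (Hmom (S N))).
Qed.

Lemma is_RInt_geom_remainder N :
  is_RInt (fun x => h x / (1 - r x) * r x ^ S N) a b (I - sum_n mom N).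
Proof.
  apply (is_RInt_ext (fun x => h x / (1 - r x) - h x * sum_n (fun k => r x ^ k) N)).
  - intros x Hx. rewrite Rmin_left, Rmax_right in Hx by lra.
    assert (Hrx : Rabs (r x) <= q) by (apply Hr; lra).
    assert (Hr1 : r x <> 1) by (intro E; rewrite E, Rabs_R1 in Hrx; lra).
    rewrite sum_n_Reals, tech3 by exact Hr1.
    as_R_eq. field. lra.
  - apply (is_RInt_minus _ _ _ _ _ _ HI (is_RInt_partial_geom N)).
Qed.

Lemma geom_remainder_bound N :
  Rabs (sum_n mom N - I) <= (b - a) * (M / (1 - q) * q ^ S N).
Proof.
  rewrite Rabs_minus_sym, <- (is_RInt_unique _ _ _ _ (is_RInt_geom_remainder N)).
  apply abs_RInt_le_const; [exact Hab | eexists; apply is_RInt_geom_remainder |].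
  intros x Hx. pose proof (Hr x Hx) as Hrx. pose proof (Hh x Hx) as Hhx.
  assert (Hden : 1 - q <= Rabs (1 - r x)).
  { pose proof (Rabs_triang_inv 1 (r x)) as T. rewrite Rabs_R1 in T. lra. }
  assert (Hinv : / Rabs (1 - r x) <= / (1 - q)) by (apply Rinv_le_contravar; lra).
  assert (Hinv0 : 0 <= / Rabs (1 - r x)) by (apply Rlt_le, Rinv_0_lt_compat; lra).
  rewrite Rabs_mult, Rabs_div, <- RPow_abs by (intro E; rewrite E, Rabs_R0 in Hden; lra).
  unfold Rdiv.
  apply Rmult_le_compat.
  - apply Rmult_le_pos; [apply Rabs_pos | exact Hinv0].
  - apply pow_le, Rabs_pos.
  - apply Rmult_le_compat; [apply Rabs_pos | exact Hinv0 | exact Hhx | exact Hinv].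
  - apply pow_incr. split; [apply Rabs_pos | exact Hrx].
Qed.

Lemma is_series_RInt_geom : is_series mom I.
Proof.
  apply (is_lim_seq_of_error_bound _ _ _ geom_remainder_bound).
  assert (Hq' : Rabs q < 1) by (rewrite Rabs_right; lra).
  pose proof (is_lim_seq_mult' _ _ ((b - a) * (M / (1 - q)) * q) 0
                (is_lim_seq_const _) (is_lim_seq_geom q Hq')) as Hgeom.
  rewrite Rmult_0_r in Hgeom.
  refine (is_lim_seq_ext _ _ _ _ Hgeom).
  intro N. simpl. ring.
Qed.

End GeometricSeriesUnderIntegral.

(* [beta m n] is Euler's B(m+1, n+1). *)
Definition beta (m n : nat) : R :=
  INR (fact m) * INR (fact n) / INR (fact (m + n + 1)).

Lemma INR_fact_gt0 n : 0 < INR (fact n).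
Proof. apply lt_0_INR, lt_O_fact. Qed.

Lemma beta_0_r m : beta m 0 = / INR (S m).
Proof.
  unfold beta. replace (m + 0 + 1)%nat with (S m) by lia.
  rewrite fact_simpl, mult_INR. simpl (INR (fact 0)).
  pose proof (INR_fact_gt0 m). pose proof (pos_INR m).
  rewrite S_INR. field. lra.
Qed.

Lemma beta_S_r m n : beta m (S n) = beta m n - beta (S m) n.
Proof.
  unfold beta. replace (m + S n + 1)%nat with (S (m + n + 1)) by lia.
  replace (S m + n + 1)%nat with (S (m + n + 1)) by lia.
  rewrite !fact_simpl, !mult_INR.
  pose proof (INR_fact_gt0 m). pose proof (INR_fact_gt0 n).
  pose proof (INR_fact_gt0 (m + n + 1)).
  rewrite !S_INR, !plus_INR. simpl (INR 1).
  pose proof (pos_INR m). pose proof (pos_INR n).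
  field. lra.
Qed.

Lemma is_RInt_pow_0_1 m : is_RInt (fun x => x ^ m) 0 1 (/ INR (S m)).
Proof.
  assert (Hm : INR (S m) <> 0) by (apply not_0_INR; lia).
  replace (/ INR (S m)) with (minus (1 ^ S m / INR (S m)) (0 ^ S m / INR (S m)))
    by (rewrite pow1, pow_i by lia; unfold minus, plus, opp; simpl; field; exact Hm).
  apply (is_RInt_derive (fun x => x ^ S m / INR (S m))).
  - intros x _. auto_derive; [exact I |]. simpl pred. field. exact Hm.
  - intros x _. apply (@ex_derive_continuous R_AbsRing R_NormedModule). auto_derive. exact I.
Qed.

Lemma is_RInt_beta n : forall m, is_RInt (fun x => x ^ m * (1 - x) ^ n) 0 1 (beta m n).
Proof.
  induction n as [|n IH]; intro m.
  - rewrite beta_0_r.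
    apply (is_RInt_ext (fun x => x ^ m)); [intros x _; simpl; as_R_eq; ring |].
    apply is_RInt_pow_0_1.
  - rewrite beta_S_r.
    apply (is_RInt_ext (fun x => x ^ m * (1 - x) ^ n - x ^ S m * (1 - x) ^ n)).
    + intros x _. simpl. as_R_eq. ring.
    + apply (is_RInt_minus _ _ _ _ _ _ (IH m) (IH (S m))).
Qed.

Definition kernel (x : R) : R := x * (1 - x) ^ 3.

Definition weight (a1 a2 a3 x : R) : R :=
  a1 * x * (1 - x) ^ 2 + a2 * x ^ 2 * (1 - x) + a3 * x ^ 3.

Definition weight_moment (a1 a2 a3 : R) (k : nat) : R :=
  a1 * beta (S k) (S (S (3 * k))) + a2 * beta (S (S k)) (S (3 * k))
  + a3 * beta (S (S (S k))) (3 * k).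

Lemma is_RInt_weight_kernel_pow a1 a2 a3 c k :
  is_RInt (fun x => weight a1 a2 a3 x * (c * kernel x) ^ k) 0 1
    (c ^ k * weight_moment a1 a2 a3 k).
Proof.
  apply (is_RInt_ext (fun x => c ^ k *
    (a1 * (x ^ S k * (1 - x) ^ S (S (3 * k))) + a2 * (x ^ S (S k) * (1 - x) ^ S (3 * k))
     + a3 * (x ^ S (S (S k)) * (1 - x) ^ (3 * k))))).
  - intros x _. unfold weight, kernel.
    rewrite !Rpow_mult_distr, <- pow_mult. cbn [pow]. as_R_eq. ring.
  - exact (is_RInt_scal _ _ _ _ _ (is_RInt_plus _ _ _ _ _ _
      (is_RInt_plus _ _ _ _ _ _ (is_RInt_scal _ _ _ a1 _ (is_RInt_beta _ _))
                                (is_RInt_scal _ _ _ a2 _ (is_RInt_beta _ _)))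
      (is_RInt_scal _ _ _ a3 _ (is_RInt_beta _ _)))).
Qed.

Lemma pow_unit_interval x n : 0 <= x <= 1 -> 0 <= x ^ n <= 1.
Proof.
  intros Hx. split; [apply pow_le; lra |].
  rewrite <- (pow1 n). apply pow_incr. lra.
Qed.

Lemma weight_bound a1 a2 a3 x :
  0 <= x <= 1 -> Rabs (weight a1 a2 a3 x) <= Rabs a1 + Rabs a2 + Rabs a3.
Proof.
  intros Hx.
  assert (Hmono : forall a m n, Rabs (a * (x ^ m * (1 - x) ^ n)) <= Rabs a).
  { intros a m n.
    pose proof (pow_unit_interval x m Hx) as Hm.
    pose proof (pow_unit_interval (1 - x) n ltac:(lra)) as Hn.
    assert (Hmn : 0 <= x ^ m * (1 - x) ^ n <= 1)
      by (split; [apply Rmult_le_pos; lra | nra]).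
    pose proof (Rabs_pos a).
    rewrite Rabs_mult, (Rabs_right (x ^ m * _)) by lra. nra. }
  replace (weight a1 a2 a3 x)
    with (a1 * (x ^ 1 * (1 - x) ^ 2) + a2 * (x ^ 2 * (1 - x) ^ 1) + a3 * (x ^ 3 * (1 - x) ^ 0))
    by (unfold weight; ring).
  eapply Rle_trans; [apply Rabs_triang |].
  apply Rplus_le_compat; [eapply Rle_trans; [apply Rabs_triang |]; apply Rplus_le_compat |];
    apply Hmono.
Qed.

Lemma kernel_bounds x : 0 <= x <= 1 -> 0 <= kernel x <= 27 / 256.
Proof.
  intros Hx. unfold kernel. split.
  - apply Rmult_le_pos; [lra | apply pow_le; lra].
  - (* the maximum is attained at x = 1/4 *)
    assert (E : 27 / 256 - x * (1 - x) ^ 3 = (x - 1/4) ^ 2 * ((x - 5/4) ^ 2 + 1/8)) by field.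
    pose proof (pow2_ge_0 (x - 1/4)). pose proof (pow2_ge_0 (x - 5/4)). nra.
Qed.

Lemma is_series_weight_moment a1 a2 a3 c I :
  0 <= c < 256 / 27 ->
  is_RInt (fun x => weight a1 a2 a3 x / (1 - c * kernel x)) 0 1 I ->
  is_series (fun k => c ^ k * weight_moment a1 a2 a3 k) I.
Proof.
  intros Hc HI.
  apply (is_series_RInt_geom (weight a1 a2 a3) (fun x => c * kernel x) 0 1
           (c * (27 / 256)) (Rabs a1 + Rabs a2 + Rabs a3)); [lra | lra | | | exact HI |].
  - intros x Hx. pose proof (kernel_bounds x Hx).
    rewrite Rabs_right by nra. nra.
  - apply weight_bound.
  - intro k. apply is_RInt_weight_kernel_pow.
Qed.

Lemma binomial_C_gt0 n k : 0 < Binomial.C n k.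
Proof.
  unfold Binomial.C. pose proof (INR_fact_gt0 n).
  pose proof (INR_fact_gt0 k). pose proof (INR_fact_gt0 (n - k)).
  apply Rdiv_lt_0_compat; [lra | nra].
Qed.

Lemma weight_moment_binomial a1 a2 a3 k :
  weight_moment a1 a2 a3 k =
  let x := INR (S k) in
  (a1 * (3 * x - 1) * (3 * x - 2) + a2 * (x + 1) * (3 * x - 2) + a3 * (x + 1) * (x + 2))
  / (3 * x * (3 * x - 1) * (3 * x - 2) * Binomial.C (4 * S k) (S k)).
Proof.
  unfold weight_moment, beta, Binomial.C. cbv zeta.
  replace (4 * S k - S k)%nat with (S (S (S (3 * k)))) by lia.
  replace (S k + S (S (3 * k)) + 1)%nat with (4 * S k)%nat by lia.
  replace (S (S k) + S (3 * k) + 1)%nat with (4 * S k)%nat by lia.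
  replace (S (S (S k)) + 3 * k + 1)%nat with (4 * S k)%nat by lia.
  rewrite !fact_simpl.
  pose proof (INR_fact_gt0 k). pose proof (INR_fact_gt0 (3 * k)).
  pose proof (INR_fact_gt0 (4 * S k)). pose proof (pos_INR k).
  rewrite !mult_INR, !S_INR, !mult_INR. simpl (INR 3).
  field. repeat split; nra.
Qed.

Lemma term1_moment k : term1 (S k) = (9 / 8) ^ k * weight_moment (117 / 4) (27 / 4) (3 / 2) k.
Proof.
  rewrite weight_moment_binomial. unfold term1. cbv zeta.
  replace (S k - 1)%nat with k by lia.
  pose proof (binomial_C_gt0 (4 * S k) (S k)). pose proof (pos_INR k).
  rewrite S_INR. field. repeat split; nra.
Qed.

Lemma term2_moment k : term2 (S k) = 8 ^ k * weight_moment 12 3 3 k.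
Proof.
  rewrite weight_moment_binomial. unfold term2. cbv zeta.
  pose proof (binomial_C_gt0 (4 * S k) (S k)). pose proof (pos_INR k).
  rewrite S_INR. simpl (8 ^ S k). field. repeat split; nra.
Qed.

Lemma continuous_weight_div_kernel a1 a2 a3 c x :
  1 - c * kernel x <> 0 -> continuous (fun y => weight a1 a2 a3 y / (1 - c * kernel y)) x.
Proof.
  intros Hx. apply (@ex_derive_continuous R_AbsRing R_NormedModule).
  unfold weight, kernel in *. auto_derive. contradict Hx. rewrite <- Hx. ring.
Qed.

Lemma kernel_factor1 x : 1 - 9 / 8 * kernel x = (3 * x ^ 2 + 1) * (3 * x ^ 2 - 9 * x + 8) / 8.
Proof. unfold kernel. field. Qed.

Lemma quadratic1_gt0 x : 0 < 3 * x ^ 2 - 9 * x + 8.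
Proof. pose proof (pow2_ge_0 (x - 3 / 2)). nra. Qed.

Definition primitive1 (x : R) : R :=
  16 / 3 * ln (3 * x ^ 2 + 1) + 16 / 3 * ln (3 * x ^ 2 - 9 * x + 8)
  + 2 * sqrt 3 * atan (sqrt 3 * x).

Lemma is_derive_primitive1 x :
  is_derive primitive1 x (weight (117 / 4) (27 / 4) (3 / 2) x / (1 - 9 / 8 * kernel x)).
Proof.
  pose proof (quadratic1_gt0 x). pose proof (pow2_ge_0 x).
  pose proof (sqrt_sqrt 3 ltac:(lra)) as Hs.
  rewrite kernel_factor1. unfold primitive1, weight.
  auto_derive; [repeat split; nra |].
  set (s := sqrt 3) in *.
  replace (1 + s * x * (s * x * 1)) with (3 * x ^ 2 + 1) by (rewrite <- Hs; ring).
  replace (2 * s * (s * 1 * / (3 * x ^ 2 + 1))) with (2 * (s * s) / (3 * x ^ 2 + 1))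
    by (field; nra).
  rewrite Hs. field. split; nra.
Qed.

Lemma atan_sqrt3 : atan (sqrt 3) = PI / 3.
Proof. rewrite <- tan_PI3. apply atan_tan. pose proof PI_RGT_0. lra. Qed.

Lemma primitive1_increment : primitive1 1 - primitive1 0 = 2 * PI / sqrt 3.
Proof.
  unfold primitive1.
  replace (3 * 1 ^ 2 + 1) with 4 by ring.
  replace (3 * 1 ^ 2 - 9 * 1 + 8) with 2 by ring.
  replace (3 * 0 ^ 2 + 1) with 1 by ring.
  replace (3 * 0 ^ 2 - 9 * 0 + 8) with (4 * 2) by ring.
  rewrite Rmult_0_r, Rmult_1_r, atan_0, atan_sqrt3, ln_1, ln_mult by lra.
  pose proof (sqrt_sqrt 3 ltac:(lra)) as Hs. pose proof (sqrt_lt_R0 3 ltac:(lra)).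
  replace (2 * PI / sqrt 3) with (2 * PI * sqrt 3 / (sqrt 3 * sqrt 3)) by (field; lra).
  rewrite Hs. field.
Qed.

Lemma is_RInt_integrand1 :
  is_RInt (fun x => weight (117 / 4) (27 / 4) (3 / 2) x / (1 - 9 / 8 * kernel x)) 0 1
    (2 * PI / sqrt 3).
Proof.
  rewrite <- primitive1_increment.
  apply (is_RInt_derive primitive1); intros x _; [apply is_derive_primitive1 |].
  apply continuous_weight_div_kernel.
  rewrite kernel_factor1. pose proof (quadratic1_gt0 x). pose proof (pow2_ge_0 x). nra.
Qed.

Definition quad2 (v : R) : R := v ^ 2 - v - 1.

Lemma quad2_norm_gt0 v : 0 < quad2 v ^ 2 + v ^ 2.
Proof.
  unfold quad2. destruct (Req_dec v 0) as [-> | Hv]; [lra |].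
  pose proof (pow2_gt_0 v Hv). pose proof (pow2_ge_0 (v ^ 2 - v - 1)). lra.
Qed.

Lemma kernel_factor2 x : 1 - 8 * kernel x = (quad2 (2 * x - 1) ^ 2 + (2 * x - 1) ^ 2) / 2.
Proof. unfold kernel, quad2. field. Qed.

(* With v = 2x - 1 and g = quad2 v, both are primitives of the integrand, as
   atan (g / v) and - atan (v / g) differ by a locally constant multiple of
   PI / 2.  The left one is singular at v = 0 (x = 1/2), the right one at the
   zeros of g, which lie outside [-1/2, 1]; hence the integral is split at
   x = 1/4. *)
Definition primitive2_left (x : R) : R :=
  3 / 8 * ln (quad2 (2 * x - 1) ^ 2 + (2 * x - 1) ^ 2)
  + 3 / 2 * atan (quad2 (2 * x - 1) / (2 * x - 1)).

Definition primitive2_right (x : R) : R :=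
  3 / 8 * ln (quad2 (2 * x - 1) ^ 2 + (2 * x - 1) ^ 2)
  - 3 / 2 * atan ((2 * x - 1) / quad2 (2 * x - 1)).

Lemma is_derive_primitive2_left x :
  2 * x - 1 <> 0 ->
  is_derive primitive2_left x (weight 12 3 3 x / (1 - 8 * kernel x)).
Proof.
  intros Hv. pose proof (quad2_norm_gt0 (2 * x - 1)) as HQ.
  rewrite kernel_factor2. unfold primitive2_left, weight, quad2 in *.
  auto_derive; [repeat split; nra |].
  field. split; [lra | nra].
Qed.

Lemma is_derive_primitive2_right x :
  quad2 (2 * x - 1) <> 0 ->
  is_derive primitive2_right x (weight 12 3 3 x / (1 - 8 * kernel x)).
Proof.
  intros Hg. pose proof (quad2_norm_gt0 (2 * x - 1)) as HQ.
  rewrite kernel_factor2. unfold primitive2_right, weight, quad2 in *.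
  auto_derive; [repeat split; [nra | contradict Hg; lra] |].
  field. split; [contradict Hg; lra | nra].
Qed.

Lemma primitive2_increment :
  (primitive2_left (1 / 4) - primitive2_left 0)
  + (primitive2_right 1 - primitive2_right (1 / 4)) = 3 * PI / 2.
Proof.
  unfold primitive2_left, primitive2_right, quad2.
  replace ((2 * (1 / 4) - 1) ^ 2 - (2 * (1 / 4) - 1) - 1) with (- (1 / 4)) by field.
  replace (2 * (1 / 4) - 1) with (- (1 / 2)) by field.
  replace ((2 * 0 - 1) ^ 2 - (2 * 0 - 1) - 1) with 1 by ring.
  replace ((2 * 1 - 1) ^ 2 - (2 * 1 - 1) - 1) with (-1) by ring.
  replace (2 * 0 - 1) with (-1) by ring.
  replace (2 * 1 - 1) with 1 by ring.
  replace (- (1 / 4) / - (1 / 2)) with (/ 2) by field.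
  replace (- (1 / 2) / - (1 / 4)) with 2 by field.
  replace (1 / -1) with (- (1)) by field.
  replace ((-1) ^ 2 + 1 ^ 2) with (1 ^ 2 + (-1) ^ 2) by ring.
  rewrite atan_inv, atan_opp, atan_1 by lra.
  field.
Qed.

Lemma is_RInt_integrand2 :
  is_RInt (fun x => weight 12 3 3 x / (1 - 8 * kernel x)) 0 1 (3 * PI / 2).
Proof.
  assert (Hcont : forall x, continuous (fun y => weight 12 3 3 y / (1 - 8 * kernel y)) x).
  { intro x. apply continuous_weight_div_kernel.
    rewrite kernel_factor2. pose proof (quad2_norm_gt0 (2 * x - 1)). lra. }
  rewrite <- primitive2_increment.
  apply (is_RInt_Chasles _ 0 (1 / 4) 1
           (primitive2_left (1 / 4) - primitive2_left 0)
           (primitive2_right 1 - primitive2_right (1 / 4))).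
  - apply (is_RInt_derive primitive2_left); intros x Hx; [| apply Hcont].
    rewrite Rmin_left, Rmax_right in Hx by lra.
    apply is_derive_primitive2_left. lra.
  - apply (is_RInt_derive primitive2_right); intros x Hx; [| apply Hcont].
    rewrite Rmin_left, Rmax_right in Hx by lra.
    apply is_derive_primitive2_right. unfold quad2. nra.
Qed.

Theorem theorem1p1 :
  is_series (fun n : nat => term1 (S n)) (2 * PI / sqrt 3) /\
  is_series (fun n : nat => term2 (S n)) (3 * PI / 2).
Proof.
  split.
  - apply (is_series_ext (fun k => (9 / 8) ^ k * weight_moment (117 / 4) (27 / 4) (3 / 2) k)).
    + intro k. symmetry. apply term1_moment.
    + apply is_series_weight_moment; [lra | exact is_RInt_integrand1].
  - apply (is_series_ext (fun k => 8 ^ k * weight_moment 12 3 3 k)).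
    + intro k. symmetry. apply term2_moment.
    + apply is_series_weight_moment; [lra | exact is_RInt_integrand2].
Qed.
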